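(* Let $n\ge2$. For $j=0,\dots,\lfloor n/2\rfloor$, $$\pi(p_j)=\begin{cases}p_0&\text{if }j=0,\\ p_j-p_{j-1}&\text{if }0<j<\lfloor n/2\rfloor,\\ -p_{\lfloor n/2\rfloor-1}&\text{if }j=\lfloor n/2\rfloor,\end{cases}$$ (where on the right $p_i$ denotes the corresponding element for $\mathfrak{S}_{n-2}$). Therefore $\pi$ maps $\wp_n$ onto $\wp_{n-2}$ with a $1$-dimensional kernel spanned by $\sum_{j=0}^{\lfloor n/2\rfloor}p_j=\sum_{u\in\mathfrak{S}_n}u$.
   Context: For $u\in\mathfrak{S}_m$, $\mathrm{Peak}(u)=\{i\in[m-1]:u_{i-1}<u_i>u_{i+1}\}$ with $u_0=0$; $\mathcal{F}_m$: subsets of $[m-1]$ without two consecutive integers; $P_F=\sum_{\mathrm{Peak}(u)=F}u$; $\mathcal{P}_m=\mathrm{span}\{P_F\}$, $\mathcal{P}_0=\mathcal{P}_1=\mathbb{Q}$. $p_j=\sum_{u\in\mathfrak{S}_m,\#\mathrm{Peak}(u)=j}u$ ($0\le j\le\lfloor m/2\rfloor$) and $\wp_m=\mathrm{span}\{p_j\}$. $\pi:\mathcal{P}_n\to\mathcal{P}_{n-2}$ is linear: $P_F\mapsto P_{F-2}$ if $1,2\notin F$; $P_F\mapsto-P_{(F\setminus\{1\})-2}$ if $1\in F$; $P_F\mapsto0$ if $2\in F$ (here $F-2=\{f-2:f\in F\}$). *)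

From HB Require Import structures.
From mathcomp Require Import all_boot all_order all_fingroup all_algebra.
Set Implicit Arguments. Unset Strict Implicit. Unset Printing Implicit Defensive.
Import GRing.Theory.
Local Open Scope ring_scope.

(* The group algebra Q[S_m] is modelled as finite functions 'S_m -> rat
   (coefficient of each permutation). *)
Notation QS m := {ffun 'S_m -> rat^o}.

Definition delta (m : nat) (u : 'S_m) : QS m := [ffun v => (v == u)%:R].

(* one-line notation: letter u i = u_i in {1..m} for 1 <= i <= m, and u_0 = 0
   (also 0 for i > m, never used).  Permutations of 'I_m are shifted by +1. *)
Definition letter (m : nat) (u : 'S_m) (i : nat) : nat :=
  if i is k.+1 then (if @insub nat (fun x => x < m)%N _ k is Some k' then (u k').+1 else 0%N)
  else 0%N.

Definition peak (m : nat) (u : 'S_m) : seq nat :=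
  [seq i <- iota 1 m.-1 | (letter u i.-1 < letter u i)%N && (letter u i.+1 < letter u i)%N].

Definition inF (m : nat) (F : seq nat) : bool :=
  [&& sorted ltn F, all (fun i => (1 <= i <= m.-1)%N) F & all (fun i => i.+1 \notin F) F].

Definition PF (m : nat) (F : seq nat) : QS m := \sum_(u : 'S_m | peak u == F) delta u.

Definition pj (m : nat) (j : nat) : QS m := \sum_(u : 'S_m | size (peak u) == j) delta u.

Definition in_wp (m : nat) (x : QS m) : Prop :=
  exists c : nat -> rat, x = \sum_(j < m./2.+1) c j *: pj m j.

Definition shift2 (F : seq nat) : seq nat := map (subn^~ 2%N) F.

Definition peak_proj_spec (n : nat) (piF : QS n -> QS (n - 2)%N) : Prop :=
  (forall (a : rat) (x y : QS n), piF (a *: x + y) = a *: piF x + piF y) /\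
  (forall F, inF n F ->
     piF (PF n F) =
       if (1%N \notin F) && (2%N \notin F) then PF (n - 2)%N (shift2 F)
       else if 1%N \in F then - PF (n - 2)%N (shift2 (rem 1%N F))
       else 0).

(* Peak sets F in F_n avoiding 1 and 2 are exactly the sets G + 2 with G in
   F_(n-2), and those containing 1 are exactly the sets {1} u (G + 2); pi kills
   all other P_F.  Grouping the P_F by |F| = j therefore gives
   pi(p_j) = p_j - p_(j-1), i.e. pi(sum_j c_j p_j) = sum_j (c_j - c_(j+1)) p_j.
   The p_j of S_m with j <= m/2 are linearly independent, being sums over
   disjoint nonempty sets of permutations.  Hence pi maps wp_n onto wp_(n-2)
   (telescoping), and its kernel consists of the constant coefficient
   sequences. *)

From HB Require Import structures.
From mathcomp Require Import all_boot all_order all_fingroup all_algebra.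
From mathcomp Require Import zify.
Import GRing.Theory.
Set Implicit Arguments. Unset Strict Implicit. Unset Printing Implicit Defensive.

Lemma sorted_subset_subseq (T : eqType) (leT : rel T) (s1 s2 : seq T) :
  transitive leT -> irreflexive leT -> sorted leT s1 -> sorted leT s2 ->
  {subset s1 <= s2} -> subseq s1 s2.
Proof.
move=> leT_tr leT_irr s1_sorted s2_sorted s12.
suff -> : s1 = [seq x <- s2 | x \in s1] by apply: filter_subseq.
apply: (irr_sorted_eq leT_tr leT_irr) => //; first exact: sorted_filter.
by move=> x; rewrite mem_filter; case: (boolP (x \in s1)) => // /s12.
Qed.

Definition subseqs (T : eqType) (s : seq T) : seq (seq T) :=
  undup [seq mask b s | b : (size s).-tuple bool].

Lemma mem_subseqs (T : eqType) (s t : seq T) : (t \in subseqs s) = subseq t s.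
Proof.
rewrite mem_undup; apply/mapP/subseqP => [[b _ ->] | [b b_size ->]].
  by exists b; rewrite ?size_tuple.
by exists (Tuple (introT eqP b_size)); rewrite ?mem_enum.
Qed.

Fixpoint sparse (lo hi : nat) (F : seq nat) : bool :=
  if F is x :: F' then (lo <= x < hi)%N && sparse x.+2 hi F' else true.

Lemma sparseE lo hi F : sparse lo hi F =
  [&& sorted ltn F, all (fun i => lo <= i < hi)%N F & all (fun i => i.+1 \notin F) F].
Proof.
elim: F lo => //= x F IH lo; rewrite IH (path_sortedE ltn_trans).
case hx: (lo <= x < hi)%N; rewrite ?andbF //=.
have range_gap : all (fun i => x.+1 < i < hi)%N F =
    [&& all (ltn x) F, all (fun i => lo <= i < hi)%N F & x.+1 \notin F].
  by rewrite -has_pred1 -all_predC -!all_predI; apply: eq_all => i /=; lia.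
rewrite range_gap in_cons (gtn_eqF (ltnSn x)) /=.
case/boolP: (all (ltn x) F) => [/allP x_lt | ]; rewrite ?andbF //=.
rewrite (@eq_in_all _ (fun i => i.+1 \notin x :: F) (fun i => i.+1 \notin F)) ?andbA //.
by move=> i /x_lt x_lt_i; rewrite in_cons gtn_eqF // ltnW.
Qed.

Lemma inF_sparse m F : inF m F = sparse 1 m F.
Proof.
rewrite /inF sparseE; congr [&& _, _ & _]; apply: eq_all => i; lia.
Qed.

Lemma sparse_all lo hi F : sparse lo hi F -> all (fun i => lo <= i < hi)%N F.
Proof. by rewrite sparseE => /and3P[]. Qed.

Lemma notin_sparse lo hi F i : (i < lo)%N -> sparse lo hi F -> i \notin F.
Proof.
move=> i_lt /sparse_all /allP F_ge; apply/negP => /F_ge /andP[+ _].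
by rewrite leqNgt i_lt.
Qed.

Lemma size_sparse lo hi F : sparse lo hi F -> (size F <= (hi.+1 - lo)./2)%N.
Proof. by elim: F lo => //= x F IH lo /andP[x_range /IH]; rewrite -!divn2; lia. Qed.

Lemma sparse_map_addn k lo hi G :
  sparse (k + lo) (k + hi) (map (addn k) G) = sparse lo hi G.
Proof. by elim: G lo => //= x G IH lo; rewrite -addnS -addnS IH !leq_add2l. Qed.

Lemma sparse_skip2 lo hi F :
  [&& sparse lo hi F, lo \notin F & lo.+1 \notin F] = sparse lo.+2 hi F.
Proof.
case: F => //= x F; case hF: (sparse x.+2 hi F); rewrite ?andbF //=.
rewrite !andbT !in_cons; have [lo_x | x_lt_lo] := leqP lo x; last first.
  by apply/esym/negbTE; lia.
by rewrite !(negbTE (notin_sparse _ hF)) ?ltnS ?orbF //; lia.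
Qed.

Lemma shift2_map_addn G : shift2 (map (addn 2) G) = G.
Proof. by rewrite /shift2 -map_comp map_id_in // => x _ /=; rewrite addKn. Qed.

Lemma map_addn_shift2 F : all (leq 2) F -> map (addn 2) (shift2 F) = F.
Proof.
by rewrite /shift2 -map_comp => /allP F_ge2; apply: map_id_in => x /F_ge2 /subnKC.
Qed.

Lemma peak_inF m (u : 'S_m) : inF m (peak u).
Proof.
rewrite /inF /peak; apply/and3P; split.
- exact: (sorted_filter ltn_trans _ (iota_ltn_sorted _ _)).
- by apply/allP => i; rewrite mem_filter mem_iota => /andP[_]; lia.
- apply/allP => i; rewrite mem_filter => /andP[/andP[_ i_desc] _].
  by rewrite mem_filter; apply/negP => /andP[/andP[+ _] _]; rewrite ltnNge ltnW.
Qed.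

Lemma size_peak m (u : 'S_m) : (size (peak u) <= m./2)%N.
Proof. by have := peak_inF u; rewrite inF_sparse => /size_sparse; rewrite subn1. Qed.

Definition peak_sets m : seq (seq nat) := [seq F <- subseqs (iota 1 m) | inF m F].

Lemma uniq_peak_sets m : uniq (peak_sets m).
Proof. exact/filter_uniq/undup_uniq. Qed.

Lemma mem_peak_sets m F : (F \in peak_sets m) = inF m F.
Proof.
rewrite mem_filter mem_subseqs andb_idr // => F_inF.
move: (F_inF); rewrite /inF => /and3P[F_sorted /allP F_range _].
apply: sorted_subset_subseq ltn_trans ltnn F_sorted (iota_ltn_sorted _ _) _.
by move=> i /F_range; rewrite mem_iota; lia.
Qed.

Section PeakSetsShift.
Variables (n : nat) (n_ge2 : (2 <= n)%N).

Lemma mem_map_addn2_peak_sets F :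
  (F \in map (map (addn 2)) (peak_sets (n - 2))) = sparse 3 n F.
Proof.
have shift_sparse G : sparse 3 n (map (addn 2) G) = sparse 1 (n - 2) G.
  by rewrite -(sparse_map_addn 2 1) subnKC.
apply/mapP/idP => [[G] | F_sparse].
  by rewrite mem_peak_sets inF_sparse => G_sparse ->; rewrite shift_sparse.
have F_ge2 : all (leq 2) F.
  by apply: sub_all (sparse_all F_sparse) => i /andP[/ltnW].
exists (shift2 F); last by rewrite map_addn_shift2.
by rewrite mem_peak_sets inF_sparse -shift_sparse map_addn_shift2.
Qed.

Lemma perm_peak_sets_avoid12 :
  perm_eq [seq F <- peak_sets n | (1 \notin F) && (2 \notin F)]
          (map (map (addn 2)) (peak_sets (n - 2))).
Proof.
apply: uniq_perm; first exact/filter_uniq/uniq_peak_sets.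
  by rewrite map_inj_uniq ?uniq_peak_sets //; exact/inj_map/addnI.
move=> F; rewrite mem_filter mem_peak_sets inF_sparse mem_map_addn2_peak_sets.
by rewrite -sparse_skip2 andbC.
Qed.

Lemma perm_peak_sets_with1 :
  perm_eq [seq F <- peak_sets n | 1 \in F]
          (map (cons 1) (map (map (addn 2)) (peak_sets (n - 2)))).
Proof.
apply: uniq_perm; first exact/filter_uniq/uniq_peak_sets.
  rewrite map_inj_uniq; last by move=> ? ? [].
  by rewrite map_inj_uniq ?uniq_peak_sets //; exact/inj_map/addnI.
move=> [|x F]; rewrite mem_filter mem_peak_sets inF_sparse.
  by rewrite in_nil; apply/esym/mapP => -[].
have -> : (x :: F \in map (cons 1) (map (map (addn 2)) (peak_sets (n - 2)))) =
    (x == 1) && (F \in map (map (addn 2)) (peak_sets (n - 2))).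
  by apply/mapP/andP => [[G G_in [-> ->]] | [/eqP -> F_in]]; last exists F.
rewrite mem_map_addn2_peak_sets /= in_cons eq_sym.
case: (x =P 1) => [-> | _] /=; first by rewrite n_ge2.
case F_sparse: (sparse x.+2 n F); rewrite ?andbF //.
by rewrite (negbTE (notin_sparse _ F_sparse)).
Qed.

End PeakSetsShift.

(* [swap_pairs j] is the one-line notation, extended by u_0 = 0, of
   2 1 4 3 ... (2j) (2j-1) (2j+1) ... m, whose peaks are 1, 3, ..., 2j-1. *)
Definition swap_pairs (j i : nat) : nat :=
  if i <= j.*2 then (if odd i then i.+1 else i.-1) else i.

Lemma odd_mod2 i : odd i = (i %% 2 == 1).
Proof. by rewrite modn2; case: odd. Qed.

Ltac swap_pairs_arith i j :=
  rewrite /swap_pairs ?odd_mod2 -?mul2n;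
  case: (leqP i (2 * j)) => ?; case: (boolP (i %% 2 == 1)) => ? /=;
  do ?[case: ifP => ?]; lia.

Lemma swap_pairsK j : involutive (swap_pairs j).
Proof. by move=> i; swap_pairs_arith i j. Qed.

Lemma swap_pairs_range j m i : j.*2 <= m -> 0 < i <= m -> 0 < swap_pairs j i <= m.
Proof. by move=> j_le i_range; swap_pairs_arith i j. Qed.

Lemma swap_pairs_peak j i : 0 < i ->
  (swap_pairs j i.-1 < swap_pairs j i) && (swap_pairs j i.+1 < swap_pairs j i) =
  odd i && (i < j.*2).
Proof. by move=> i_gt0; swap_pairs_arith i j. Qed.

Lemma count_odd_below j k :
  count (fun i => odd i && (i < j.*2)) (iota 1 k) = minn j k.+1./2.
Proof.
elim: k => [|k IH]; first by rewrite minn0.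
rewrite -(addn1 k) iotaD count_cat IH -!divn2 /= addn0 odd_mod2 -!mul2n.
by do ?[case: ifP => ?]; lia.
Qed.

Section PeakWitness.
Variables (m j : nat) (j_le : j.*2 <= m).

Fact swap_ord_subproof (k : 'I_m) : (swap_pairs j k.+1).-1 < m.
Proof.
have /andP[+ +] := swap_pairs_range j_le (ltn_ord k : 0 < k.+1 <= m).
by case: swap_pairs.
Qed.

Definition swap_ord (k : 'I_m) : 'I_m := Ordinal (swap_ord_subproof k).

Lemma swap_ordK : involutive swap_ord.
Proof.
move=> k; apply: val_inj => /=.
have /andP[pos _] := swap_pairs_range j_le (ltn_ord k : 0 < k.+1 <= m).
by rewrite prednK // swap_pairsK.
Qed.

Definition peak_witness : 'S_m := perm (inv_inj swap_ordK).

Lemma letter_peak_witness i : i <= m -> letter peak_witness i = swap_pairs j i.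
Proof.
case: i => [|k] k_lt; first by rewrite /swap_pairs.
have /andP[pos _] := swap_pairs_range j_le (k_lt : 0 < k.+1 <= m).
by rewrite /letter insubT /= permE prednK.
Qed.

Lemma size_peak_witness : size (peak peak_witness) = j.
Proof.
rewrite /peak (@eq_in_filter _ _ (fun i => odd i && (i < j.*2))); last first.
  move=> i; rewrite mem_iota => /andP[i_gt0 i_lt].
  by rewrite !letter_peak_witness ?swap_pairs_peak //; lia.
by rewrite size_filter count_odd_below -divn2; move: j_le; rewrite -mul2n; lia.
Qed.

End PeakWitness.

Lemma exists_perm_size_peak m j : j <= m./2 -> exists u : 'S_m, size (peak u) = j.
Proof.
move=> j_le; have j2_le : j.*2 <= m by rewrite -!divn2 -!mul2n in j_le *; lia.
by exists (peak_witness j2_le); apply: size_peak_witness.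
Qed.

Local Open Scope ring_scope.

Section LinearFun.
Variables (R : pzRingType) (U V : lmodType R) (f : U -> V) (f_lin : linear f).

Let fL : {linear U -> V} := HB.pack f (GRing.isLinear.Build _ _ _ _ f f_lin).

Lemma linear_fun_sum (I : Type) (r : seq I) (P : pred I) (E : I -> U) :
  f (\sum_(i <- r | P i) E i) = \sum_(i <- r | P i) f (E i).
Proof. exact: (linear_sum fL). Qed.

Lemma linear_funZ a x : f (a *: x) = a *: f x.
Proof. exact: (linearZ_LR fL). Qed.

End LinearFun.

Lemma pj_peak_sets m j : pj m j = \sum_(F <- peak_sets m | size F == j) PF m F.
Proof.
rewrite /PF (exchange_big_dep (fun u : 'S_m => size (peak u) == j)) /=; last first.
  by move=> F u /eqP <- /eqP ->.
apply: eq_bigr => u u_j; rewrite big_mkcond (bigD1_seq (peak u)) /=; last first.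
- exact: uniq_peak_sets.
- by rewrite mem_peak_sets peak_inF.
rewrite u_j eqxx big1 ?addr0 // => F /negbTE F_u.
by rewrite [peak u == F]eq_sym F_u andbF.
Qed.

Lemma pj_eq0 m j : (m./2 < j)%N -> pj m j = 0.
Proof.
move=> j_gt; rewrite /pj big_pred0 // => u; apply/negbTE/eqP => u_j.
by have := size_peak u; rewrite u_j leqNgt j_gt.
Qed.

Lemma sum_pj m : \sum_(j < m./2.+1) pj m j = \sum_(u : 'S_m) delta u.
Proof.
rewrite /pj (exchange_big_dep xpredT) //=; apply: eq_bigr => u _.
have u_lt : (size (peak u) < m./2.+1)%N by rewrite ltnS size_peak.
by rewrite (big_pred1 (Ordinal u_lt)) // => j /=.
Qed.

Lemma pj_eval m j (u : 'S_m) : pj m j u = (size (peak u) == j)%:R.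
Proof.
rewrite /pj sum_ffunE; have [u_j | u_nj] := eqVneq (size (peak u)) j.
  rewrite (bigD1 u) ?u_j //= ffunE eqxx big1 ?addr0 // => v /andP[_ v_u].
  by rewrite ffunE eq_sym (negbTE v_u).
rewrite big1 // => v v_j; rewrite ffunE.
by case: (u =P v) v_j => // <-; rewrite (negbTE u_nj).
Qed.

Lemma pj_comb_eval m K (d : nat -> rat) (u : 'S_m) : (size (peak u) < K)%N ->
  (\sum_(i < K) d i *: pj m i) u = d (size (peak u)).
Proof.
move=> u_lt; rewrite sum_ffunE (bigD1 (Ordinal u_lt)) //= ffunE pj_eval eqxx.
rewrite big1 ?addr0; first exact: mulr1.
move=> i i_ne; rewrite ffunE pj_eval.
suff /negbTE -> : size (peak u) != i by exact: mulr0.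
by apply: contra i_ne => /eqP u_i; apply/eqP/val_inj.
Qed.

Lemma pj_comb_eq0 m K (d : nat -> rat) : (K <= m./2.+1)%N ->
  \sum_(i < K) d i *: pj m i = 0 -> forall i, (i < K)%N -> d i = 0.
Proof.
move=> K_le comb0 i i_lt.
have [u u_i] : exists u : 'S_m, size (peak u) = i.
  by apply: exists_perm_size_peak; rewrite -ltnS (leq_trans i_lt).
by rewrite -u_i -(@pj_comb_eval m K d) ?u_i // comb0 ffunE.
Qed.

Lemma sum_delta_neq0 m : \sum_(u : 'S_m) delta u != 0.
Proof.
apply/eqP => /(congr1 (fun f : QS m => f 1%g)); rewrite sum_ffunE ffunE.
rewrite (bigD1 1%g) //= ffunE eqxx big1 ?addr0 // => v /negbTE v_1.
by rewrite ffunE eq_sym v_1.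
Qed.

Lemma half_subn2 n : (2 <= n)%N -> (n - 2)./2.+1 = n./2.
Proof. by move=> n_ge2; rewrite -!divn2; lia. Qed.

Section Projection.
Variables (n : nat) (n_ge2 : (2 <= n)%N) (piF : QS n -> QS (n - 2)).
Hypothesis piF_spec : peak_proj_spec piF.

Let piF_lin : linear piF := piF_spec.1.

Lemma piF_PF F : F \in peak_sets n ->
  piF (PF n F) =
    (if (1%N \notin F) && (2%N \notin F) then PF (n - 2) (shift2 F) else 0)
    - (if 1%N \in F then PF (n - 2) (shift2 (rem 1%N F)) else 0).
Proof.
rewrite mem_peak_sets => F_inF; rewrite piF_spec.2 //.
by case: (1%N \in F); case: (2%N \in F); rewrite /= ?subr0 ?sub0r.
Qed.

Lemma piF_pj j :
  piF (pj n j) = pj (n - 2) j - (if j is k.+1 then pj (n - 2) k else 0).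
Proof.
rewrite pj_peak_sets (linear_fun_sum piF_lin) big_seq_cond.
rewrite (eq_bigr _ (fun F F_in => piF_PF (proj1 (andP F_in)))) -big_seq_cond sumrB.
rewrite -!big_mkcondl -!big_filter_cond; congr (_ - _).
  rewrite (perm_big _ (perm_peak_sets_avoid12 n_ge2)) big_map pj_peak_sets.
  by apply: eq_big => G; rewrite ?size_map ?shift2_map_addn.
rewrite (perm_big _ (perm_peak_sets_with1 n_ge2)) !big_map /=.
case: j => [|k]; first by rewrite big_pred0.
by rewrite pj_peak_sets; apply: eq_big => G; rewrite ?size_map ?eqSS ?shift2_map_addn.
Qed.

Lemma piF_pj_comb (c : nat -> rat) :
  piF (\sum_(j < n./2.+1) c j *: pj n j) =
    \sum_(j < (n - 2)./2.+1) (c j - c j.+1) *: pj (n - 2) j.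
Proof.
rewrite (linear_fun_sum piF_lin).
under eq_bigr do rewrite (linear_funZ piF_lin) piF_pj scalerBr.
rewrite sumrB big_ord_recr big_ord_recl /= pj_eq0 ?scaler0 ?addr0 ?add0r; last first.
  by rewrite -!divn2; lia.
rewrite half_subn2 // -sumrB; apply: eq_bigr => i _.
by rewrite /bump add0n scalerBl.
Qed.

Lemma piF_wp x : in_wp x -> in_wp (piF x).
Proof. by case=> c ->; exists (fun j => c j - c j.+1); rewrite piF_pj_comb. Qed.

Lemma piF_wp_onto y : in_wp y -> exists x, in_wp x /\ piF x = y.
Proof.
case=> d ->; pose e i := \sum_(i <= k < n./2) d k.
exists (\sum_(j < n./2.+1) e j *: pj n j); split; first by exists e.
rewrite piF_pj_comb; apply: eq_bigr => i _; congr (_ *: _).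
have i_lt : (i < n./2)%N by rewrite -(half_subn2 n_ge2).
by rewrite /e big_ltn // addrK.
Qed.

Lemma piF_wp_ker x : in_wp x ->
  piF x = 0 <-> exists c : rat, x = c *: \sum_(j < n./2.+1) pj n j.
Proof.
case=> c ->; split => [piF0 | [a ->]].
  have c_step k : (k < n./2)%N -> c k = c k.+1.
    rewrite -(half_subn2 n_ge2) => k_lt; apply/eqP; rewrite -subr_eq0; apply/eqP.
    apply: (pj_comb_eq0 (d := fun j => c j - c j.+1) (leqnn _)) k_lt.
    by rewrite -piF_pj_comb.
  have c_const k : (k <= n./2)%N -> c k = c 0%N.
    by elim: k => // k IH k_lt; rewrite -c_step ?IH // ltnW.
  exists (c 0%N); rewrite scaler_sumr; apply: eq_bigr => j _.
  by rewrite c_const // -ltnS.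
rewrite scaler_sumr (piF_pj_comb (fun=> a)) big1 // => j _.
by rewrite subrr scale0r.
Qed.

End Projection.

Theorem proposition6p11 (n : nat) (hn : (2 <= n)%N)
    (piF : QS n -> QS (n - 2))
    (hpi : peak_proj_spec piF) :
  (forall j : nat, (j <= n./2)%N ->
     piF (pj n j) =
       if j == 0%N then pj (n - 2) 0
       else if (j < n./2)%N then pj (n - 2) j - pj (n - 2) j.-1
       else - pj (n - 2) (n./2).-1) /\
  (forall x, in_wp x -> in_wp (piF x)) /\
  (forall y, in_wp y -> exists x, in_wp x /\ piF x = y) /\
  (forall x, in_wp x ->
     (piF x = 0 <-> exists c : rat, x = c *: \sum_(j < n./2.+1) pj n j)) /\
  \sum_(j < n./2.+1) pj n j = \sum_(u : 'S_n) delta u /\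
  \sum_(j < n./2.+1) pj n j != 0.
Proof.
split.
  move=> [|k] k_le; rewrite (piF_pj hn hpi) ?subr0 //=.
  case: ltnP => // k_ge; have -> : k = (n./2).-1.
    by rewrite -(half_subn2 hn) in k_le *; lia.
  by rewrite pj_eq0 ?sub0r // -(half_subn2 hn).
split; first by move=> x; apply: piF_wp.
split; first by move=> y; apply: piF_wp_onto.
split; first by move=> x; apply: piF_wp_ker.
by rewrite sum_pj; split; last exact: sum_delta_neq0.
Qed.
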